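(* Consider the following time-slotted remote tracking system. A source state $X_t$ evolves as a discrete-time Markov chain on $\{0,1,\dots,N\}$ ($N\in\mathbb{Z}_{>0}$) with transition probabilities $P_{i,k}=\Pr\{X_{t+1}=k\mid X_t=i\}$. A receiver holds an estimate $\hat X_t$. At each slot the transmitter chooses $\alpha_t\in\{0,1\}$ ($\alpha_t=1$: sample the source and transmit, incurring cost $c>0$). The channel realization $h_t\in\{0,1\}$ is i.i.d. with $\Pr(h_t=1)=p_s$; if $\alpha_t=1$ and $h_t=1$ the receiver updates $\hat X_{t+1}=X_t$, otherwise $\hat X_{t+1}=\hat X_t$. Given a nonnegative bounded actuation cost matrix $(C_{i,j})$, define, when $X_t=i$ and $\hat X_t=j$, $$g(t)=\begin{cases}\sum_{k=i}^{N} C_{k,j}P_{i,k}(1-p_s)+\sum_{k=i}^{N} C_{k,i}P_{i,k}\,p_s, & \alpha_t=1,\\[1mm] \sum_{k=i}^{N} C_{k,j}P_{i,k}, & \alpha_t=0.\end{cases}$$ Let $c_{\max}$ be a given bound and consider the problem of minimizing $\limsup_{T\to\infty}\frac1T\sum_{t=1}^T\mathbb{E}\{g(t)\}$ subject to $\bar c:=\lim_{T\to\infty}\frac1T\sum_{t=1}^T\mathbb{E}\{\alpha_t c\}\le c_{\max}$. The drift-plus-penalty (DPP) algorithm, with parameter $W>0$, maintains the virtual queue $Z(0)=0$, $Z(t+1)=\max[Z(t)-c_{\max},0]+\alpha_t c$, and at every slot $t$, observing $X_t$, $\hat X_t$ and $Z(t)$, chooses $\alpha_t\in\{0,1\}$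 minimizing $W g(t)+Z(t)(c\alpha_t-c_{\max})$. If the constrained problem is feasible, then the DPP algorithm satisfies the average cost constraint, i.e. $\limsup_{T\to\infty}\frac1T\sum_{t=1}^T\mathbb{E}\{\alpha_t c\}\le c_{\max}$.
   Context: $C_{i,j}$ is the cost of actuation error incurred when the source is in state $i$ while the receiver's estimate is $j$. A policy is a rule selecting $\alpha_t$ at each slot; the problem is feasible if some policy satisfies the average cost constraint. *)

From HB Require Import structures.
From mathcomp Require Import all_boot all_order all_algebra.
From mathcomp Require Import all_classical all_reals all_analysis.
Set Implicit Arguments. Unset Strict Implicit. Unset Printing Implicit Defensive.
Import Order.TTheory GRing.Theory Num.Theory.
Local Open Scope ring_scope.

(* Remote tracking system.  Source states are 'I_N.+1 = {0,...,N}.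
   A (past) slot record is (X_s, Xhat_s, alpha_s, h_s). A history at slot t is
   (past records for s < t, X_t, Xhat_t). *)
Section Tracking.
Variables (R : realType) (N : nat).
Notation S := 'I_N.+1.
Definition record := (S * S * bool * bool)%type.
Definition history := (seq record * S * S)%type.

Variables (P : S -> S -> R) (ps c : R) (C : S -> S -> R).

(* A general (randomized, history-dependent) policy: given the past records and
   the current (X_t, Xhat_t), the probability of choosing alpha_t = 1. *)
Definition policy := seq record -> S -> S -> R.

Definition is_policy (pol : policy) :=
  forall hs x xh, 0 <= pol hs x xh <= 1.

Definition bern (q : R) (b : bool) : R := if b then q else 1 - q.

Definition step_one (pol : policy) (e : R * history) : seq (R * history) :=
  let: (w, (hs, x, xh)) := e in
  flatten [seq flatten [seq
     [seq (w * bern (pol hs x xh) a * bern ps h * P x k,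
           (rcons hs (x, xh, a, h), k, if a && h then x else xh))
     | k <- enum S] | h <- [:: true; false]] | a <- [:: true; false]].

(* Law of the history at slot t: a finitely supported distribution given as a
   list of (probability, history) pairs, starting from initial law mu0 of
   (X_0, Xhat_0). *)
Fixpoint law (mu0 : S -> S -> R) (pol : policy) (t : nat) : seq (R * history) :=
  match t with
  | 0 => [seq (mu0 p.1 p.2, ([::], p.1, p.2)) | p <- enum {: S * S}]
  | t'.+1 => flatten [seq step_one pol e | e <- law mu0 pol t']
  end.

Definition exp_sampling_cost mu0 pol t : R :=
  \sum_(e <- law mu0 pol t) e.1 * (pol e.2.1.1 e.2.1.2 e.2.2 * c).

Definition avg_sampling_cost mu0 pol (T : nat) : R :=
  T%:R^-1 * \sum_(t < T) exp_sampling_cost mu0 pol t.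

Definition limsup_avg_cost mu0 pol : \bar R :=
  limn_esup (fun T => (avg_sampling_cost mu0 pol T)%:E).

Definition feasible mu0 (cmax : R) :=
  exists pol, is_policy pol /\ (limsup_avg_cost mu0 pol <= cmax%:E)%E.

Definition gcost (i j : S) (a : bool) : R :=
  if a then \sum_(k < N.+1 | (i <= k)%N) C k j * P i k * (1 - ps)
          + \sum_(k < N.+1 | (i <= k)%N) C k i * P i k * ps
  else \sum_(k < N.+1 | (i <= k)%N) C k j * P i k.

Definition Zqueue (cmax : R) (hs : seq record) : R :=
  foldl (fun z (r : record) => Num.max (z - cmax) 0 + (r.1.2 : bool)%:R * c) 0 hs.

Definition is_dpp_rule (W cmax : R) (dec : nat -> S -> S -> R -> bool) :=
  forall t x xh z (b : bool),
    W * gcost x xh (dec t x xh z) + z * (c * (dec t x xh z)%:R - cmax)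
      <= W * gcost x xh b + z * (c * b%:R - cmax).

Definition dpp_policy (cmax : R) (dec : nat -> S -> S -> R -> bool) : policy :=
  fun hs x xh => (dec (size hs) x xh (Zqueue cmax hs))%:R.

End Tracking.

From HB Require Import structures.
From mathcomp Require Import all_boot all_order all_algebra.
From mathcomp Require Import all_classical all_reals all_analysis.
From mathcomp Require Import ring lra.
Set Implicit Arguments. Unset Strict Implicit. Unset Printing Implicit Defensive.
Import Order.TTheory GRing.Theory Num.Theory.
Local Open Scope ring_scope.

(* Let B be the largest gain g(i,j,0) - g(i,j,1) of sampling.  Because
   W g(t) + Z(t) (c alpha - cmax) is minimised, DPP samples only when
   Z(t) c <= W B, so the virtual queue, which grows by at most c per slot,
   never exceeds M = W B / c + c.  Telescoping
   Z(t+1) >= Z(t) - cmax + alpha_t c gives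
   sum_(t < T) E[alpha_t c] <= E[Z(T)] + T cmax <= M + T cmax, hence the
   average sampling cost is at most cmax + M / T.  Feasibility only serves to
   ensure cmax >= 0 (an average cost is nonnegative). *)

Lemma bern_ge0 (R : realType) (q : R) (b : bool) : 0 <= q <= 1 -> 0 <= bern q b.
Proof. by case: b => /andP[? ?] /=; lra. Qed.

Lemma bern_natr_eq0 (R : realType) (a b : bool) : (bern (b%:R : R) a == 0) = (a != b).
Proof. by case: a; case: b; rewrite /= ?subrr ?subr0 ?oner_eq0 ?eqxx. Qed.

Lemma limn_esup_ge (R : realType) (u : (\bar R)^nat) (l : \bar R) :
  (forall n, (l <= u n)%E) -> (l <= limn_esup u)%E.
Proof.
move=> lu; rewrite limn_esup_lim; apply: lime_ge; first exact: is_cvg_esups.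
apply: nearW => n; apply: le_trans (lu n) _.
by apply: ereal_sup_ubound; exists n => /=.
Qed.

Lemma limn_esup_le_add_divn (R : realType) (u : R^nat) (a b : R) :
  (forall n, (0 < n)%N -> u n <= a + b / n%:R) ->
  (limn_esup (fun n => (u n)%:E) <= a%:E)%E.
Proof.
move=> ub; apply/lee_addgt0Pr => eps eps_gt0.
rewrite limn_esup_lim; apply: lime_le; first exact: is_cvg_esups.
exists (Num.truncn (b / eps)).+1 => // n /= n_large.
apply: ge_ereal_sup => _ [k /= nk <-]; rewrite -EFinD lee_fin.
have k_large : b / eps < k%:R.
  by apply: lt_le_trans (truncnS_gt _) _; rewrite ler_nat (leq_trans n_large).
have k_gt0 : (0 < k)%N by apply: leq_trans nk; apply: leq_trans n_large.
apply: le_trans (ub k k_gt0) _; rewrite lerD2l ler_pdivrMr ?ltr0n //.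
by rewrite mulrC ltW // -ltr_pdivrMr.
Qed.

Section Queue.
Variables (R : realType) (N : nat) (c cmax : R).
Hypothesis c_ge0 : 0 <= c.

Lemma Zqueue_rcons hs (r : record N) :
  Zqueue c cmax (rcons hs r) = Num.max (Zqueue c cmax hs - cmax) 0 + (r.1.2 : bool)%:R * c.
Proof. exact: foldl_rcons. Qed.

Lemma Zqueue_ge0 (hs : seq (record N)) : 0 <= Zqueue c cmax hs.
Proof.
case/lastP: hs => [|hs r]; first by rewrite /Zqueue.
by rewrite Zqueue_rcons addr_ge0 ?le_max ?lexx ?orbT // mulr_ge0.
Qed.

Lemma Zqueue_rcons_le (M : R) (hs : seq (record N)) x xh (a h : bool) :
  0 <= cmax -> 0 <= M -> Zqueue c cmax hs <= M + c ->
  (a -> Zqueue c cmax hs <= M) ->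
  Zqueue c cmax (rcons hs (x, xh, a, h)) <= M + c.
Proof.
move=> cmax_ge0 M_ge0 Z_le sample_le; rewrite Zqueue_rcons /=.
have Z_ge0 := Zqueue_ge0 hs.
case: a sample_le => [/(_ isT) Z_leM|_] /=.
  by rewrite mul1r lerD2r ge_max M_ge0 andbT; lra.
by rewrite mul0r addr0 ge_max; apply/andP; split; lra.
Qed.

End Queue.

Section Law.
Variables (R : realType) (N : nat) (P : 'I_N.+1 -> 'I_N.+1 -> R) (ps : R).
Hypotheses (P_ge0 : forall i k, 0 <= P i k)
  (P_sum1 : forall i, \sum_(k < N.+1) P i k = 1) (ps01 : 0 <= ps <= 1).
Variables (mu0 : 'I_N.+1 -> 'I_N.+1 -> R) (pol : policy R N).
Hypotheses (mu0_ge0 : forall x xh, 0 <= mu0 x xh)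
  (mu0_sum1 : \sum_(x < N.+1) \sum_(xh < N.+1) mu0 x xh = 1)
  (pol01 : is_policy pol).

Definition expectation t (f : history N -> R) : R :=
  \sum_(e <- law P ps mu0 pol t) e.1 * f e.2.

Lemma mem_law_succ t e' :
  e' \in law P ps mu0 pol t.+1 ->
  exists2 e, e \in law P ps mu0 pol t & e' \in step_one P ps pol e.
Proof. by move=> /flatten_mapP. Qed.

Lemma mem_step_one w hs x xh e' :
  e' \in step_one P ps pol (w, (hs, x, xh)) ->
  exists a h k, e' = (w * bern (pol hs x xh) a * bern ps h * P x k,
           (rcons hs (x, xh, a, h), k, if a && h then x else xh)).
Proof.
by move=> /flatten_mapP [a _ /flatten_mapP [h _ /mapP [k _ ->]]]; exists a, h, k.
Qed.

Lemma law_weight_ge0 t e : e \in law P ps mu0 pol t -> 0 <= e.1.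
Proof.
elim: t e => [|t IH] e; first by move=> /mapP [p _ ->] /=.
move=> /mem_law_succ [[w [[hs x] xh]] /IH /= w_ge0 /mem_step_one [a [h [k ->]]]].
by rewrite /= !mulr_ge0 ?bern_ge0.
Qed.

(* The channel outcome and the source transition sum out. *)
Lemma expectation_succ t (f : history N -> R) G :
  (forall hs x xh a h k xh', f (rcons hs (x, xh, a, h), k, xh') = G hs x xh a) ->
  expectation t.+1 f = expectation t (fun '(hs, x, xh) =>
     pol hs x xh * G hs x xh true + (1 - pol hs x xh) * G hs x xh false).
Proof.
move=> fG; rewrite /expectation [law _ _ _ _ t.+1]/= big_flatten /= big_map.
apply: eq_bigr => -[w [[hs x] xh]] _.
have sum_k A a h xh' : \sum_(e <- [seq (A * P x k, (rcons hs (x, xh, a, h), k, xh'))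
       | k <- enum 'I_N.+1]) e.1 * f e.2 = A * G hs x xh a.
  rewrite big_map; under eq_bigr do rewrite /= fG.
  by rewrite -big_distrl -big_distrr /= big_enum /= P_sum1 mulr1.
rewrite /step_one /= !big_cat !big_nil !sum_k /=; ring.
Qed.

Lemma expectation_cst t k : expectation t (fun=> k) = k.
Proof.
suff mass1 : expectation t (fun=> 1) = 1.
  by rewrite -[RHS]mul1r -mass1 /expectation big_distrl; apply: eq_bigr => e _; rewrite mulr1.
elim: t => [|t IH].
  rewrite /expectation /= big_map big_enum /=.
  by under eq_bigr do rewrite mulr1; rewrite -mu0_sum1 pair_bigA.
rewrite (@expectation_succ _ _ (fun _ _ _ _ => 1)) // -[RHS]IH.
by apply: eq_bigr => -[w [[hs x] xh]] _ /=; ring.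
Qed.

Lemma expectationD t (f g : history N -> R) :
  expectation t (fun hi => f hi + g hi) = expectation t f + expectation t g.
Proof. by rewrite /expectation -big_split; apply: eq_bigr => e _; rewrite mulrDr. Qed.

Lemma ler_expectation t (f g : history N -> R) :
  (forall e, e \in law P ps mu0 pol t -> e.1 != 0 -> f e.2 <= g e.2) ->
  expectation t f <= expectation t g.
Proof.
move=> fg; rewrite /expectation !big_seq; apply: ler_sum => e e_law.
have [->|e_neq0] := eqVneq e.1 0; first by rewrite !mul0r.
by apply: ler_wpM2l; [exact: law_weight_ge0 e_law | exact: fg].
Qed.

Lemma exp_sampling_costE (c : R) t :
  exp_sampling_cost P ps c mu0 pol t = expectation t (fun hi => pol hi.1.1 hi.1.2 hi.2 * c).
Proof. by []. Qed.

Lemma exp_sampling_cost_ge0 (c : R) t : 0 <= c -> 0 <= exp_sampling_cost P ps c mu0 pol t.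
Proof.
move=> c_ge0; rewrite /exp_sampling_cost big_seq sumr_ge0 // => e e_law.
have /andP[pol_ge0 _] := pol01 e.2.1.1 e.2.1.2 e.2.2.
by rewrite !mulr_ge0 // (law_weight_ge0 e_law).
Qed.

Lemma sum_exp_sampling_cost_le (c cmax : R) T :
  \sum_(t < T) exp_sampling_cost P ps c mu0 pol t <=
  expectation T (fun hi => Zqueue c cmax hi.1.1) + T%:R * cmax.
Proof.
elim: T => [|T IH].
  rewrite big_ord0 /expectation /= big_map big1 ?add0r ?mul0r // => p _.
  by rewrite /Zqueue mulr0.
rewrite big_ord_recr /= -natr1 (@expectation_succ _ _
  (fun hs _ _ a => Num.max (Zqueue c cmax hs - cmax) 0 + a%:R * c)); last first.
  by move=> *; rewrite /= Zqueue_rcons.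
set drift := expectation T _.
have drift_ge : expectation T (fun hi => Zqueue c cmax hi.1.1 + (- cmax)
     + pol hi.1.1 hi.1.2 hi.2 * c) <= drift.
  apply: ler_expectation => -[w [[hs x] xh]] _ _ /=.
  rewrite [leRHS](_ : _ = Num.max (Zqueue c cmax hs - cmax) 0 + pol hs x xh * c); last by ring.
  by rewrite lerD2r le_max lexx.
rewrite !expectationD expectation_cst in drift_ge.
rewrite [exp_sampling_cost _ _ _ _ _ T]exp_sampling_costE; lra.
Qed.

Lemma limsup_avg_cost_ge0 (c : R) : 0 <= c -> (0 <= limsup_avg_cost P ps c mu0 pol)%E.
Proof.
move=> c_ge0; apply: limn_esup_ge => T; rewrite lee_fin mulr_ge0 ?invr_ge0 ?sumr_ge0 //.
by move=> t _; exact: exp_sampling_cost_ge0.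
Qed.

End Law.

Section Dpp.
Variables (R : realType) (N : nat) (P : 'I_N.+1 -> 'I_N.+1 -> R) (ps : R).
Variables (c : R) (C : 'I_N.+1 -> 'I_N.+1 -> R) (cmax W : R).
Variable dec : nat -> 'I_N.+1 -> 'I_N.+1 -> R -> bool.
Hypotheses (P_ge0 : forall i k, 0 <= P i k)
  (P_sum1 : forall i, \sum_(k < N.+1) P i k = 1) (ps01 : 0 <= ps <= 1).
Hypotheses (c_gt0 : 0 < c) (W_gt0 : 0 < W) (dec_dpp : is_dpp_rule P ps c C W cmax dec).

Definition max_sampling_gain : R :=
  \big[Num.max/0]_(p : 'I_N.+1 * 'I_N.+1)
     (gcost P ps C p.1 p.2 false - gcost P ps C p.1 p.2 true).

Lemma max_sampling_gain_ge0 : 0 <= max_sampling_gain.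
Proof. exact: bigmax_ge_id. Qed.

(* Sampling must lower W g(t) by at least Z(t) c, which is at most W times the largest gain. *)
Lemma dpp_sample_queue_le t x xh z : dec t x xh z -> z <= W * max_sampling_gain / c.
Proof.
move=> sample; have := dec_dpp t x xh z false; rewrite sample /= mulr1 mulr0.
have := le_bigmax 0 (fun p : 'I_N.+1 * 'I_N.+1 =>
  gcost P ps C p.1 p.2 false - gcost P ps C p.1 p.2 true) (x, xh).
rewrite -/max_sampling_gain /= ler_pdivlMr // => gain_le dpp_le.
have := ler_wpM2l (ltW W_gt0) gain_le; nra.
Qed.

Lemma dpp_policy_is_policy : is_policy (dpp_policy c cmax dec).
Proof. by move=> hs x xh; rewrite /dpp_policy; case: dec; rewrite /= ler01 lexx. Qed.

Hypothesis cmax_ge0 : 0 <= cmax.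

Lemma dpp_queue_le mu0 t e :
  e \in law P ps mu0 (dpp_policy c cmax dec) t -> e.1 != 0 ->
  Zqueue c cmax e.2.1.1 <= W * max_sampling_gain / c + c.
Proof.
have bound_ge0 : 0 <= W * max_sampling_gain / c.
  by rewrite divr_ge0 ?mulr_ge0 ?max_sampling_gain_ge0 ?ltW.
elim: t e => [|t IH] e.
  by move=> /mapP [p _ ->] _; rewrite /Zqueue /= addr_ge0 // ltW.
move=> /mem_law_succ [[w [[hs x] xh]] e_law /mem_step_one [a [h [k ->]]]] /=.
rewrite /dpp_policy !mulf_eq0 bern_natr_eq0 !negb_or negbK.
move=> /andP[/andP[/andP[w_neq0 /eqP a_dec] _] _].
apply: Zqueue_rcons_le => //; first exact: ltW.
  exact: IH _ e_law w_neq0.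
by rewrite a_dec; exact: dpp_sample_queue_le.
Qed.

Variable mu0 : 'I_N.+1 -> 'I_N.+1 -> R.
Hypotheses (mu0_ge0 : forall x xh, 0 <= mu0 x xh)
  (mu0_sum1 : \sum_(x < N.+1) \sum_(xh < N.+1) mu0 x xh = 1).

Lemma dpp_avg_sampling_cost_le T : (0 < T)%N ->
  avg_sampling_cost P ps c mu0 (dpp_policy c cmax dec) T <=
  cmax + (W * max_sampling_gain / c + c) / T%:R.
Proof.
move=> T_gt0; have pol01 := dpp_policy_is_policy.
have queue_le : expectation P ps mu0 (dpp_policy c cmax dec) T
    (fun hi => Zqueue c cmax hi.1.1) <= W * max_sampling_gain / c + c.
  rewrite -[leRHS](expectation_cst ps P_sum1 (dpp_policy c cmax dec) mu0_sum1 T).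
  by apply: ler_expectation => // e; exact: dpp_queue_le.
have sum_le := sum_exp_sampling_cost_le P_ge0 P_sum1 ps01 mu0_ge0 mu0_sum1 pol01 c cmax T.
rewrite /avg_sampling_cost mulrC ler_pdivrMr ?ltr0n // mulrDl divfK ?pnatr_eq0 -?lt0n //.
lra.
Qed.

End Dpp.

Theorem theorem2 (R : realType) (N : nat) (HN : (0 < N)%N)
  (P : 'I_N.+1 -> 'I_N.+1 -> R)
  (HP0 : forall i k, 0 <= P i k)
  (HP1 : forall i, \sum_(k < N.+1) P i k = 1)
  (ps : R) (Hps : 0 <= ps <= 1)
  (c : R) (Hc : 0 < c)
  (C : 'I_N.+1 -> 'I_N.+1 -> R) (HC : forall i j, 0 <= C i j)
  (mu0 : 'I_N.+1 -> 'I_N.+1 -> R) (Hmu0 : forall x xh, 0 <= mu0 x xh)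
  (Hmu1 : \sum_(x < N.+1) \sum_(xh < N.+1) mu0 x xh = 1)
  (cmax W : R) (HW : 0 < W)
  (dec : nat -> 'I_N.+1 -> 'I_N.+1 -> R -> bool)
  (Hdec : is_dpp_rule P ps c C W cmax dec) :
  feasible P ps c mu0 cmax ->
  (limsup_avg_cost P ps c mu0 (dpp_policy c cmax dec) <= cmax%:E)%E.
Proof.
move=> [pol [pol01 pol_le]].
have cmax_ge0 : 0 <= cmax.
  by rewrite -lee_fin (le_trans (limsup_avg_cost_ge0 HP0 Hps Hmu0 pol01 (ltW Hc))).
apply: limn_esup_le_add_divn => T T_gt0.
exact: (dpp_avg_sampling_cost_le HP0 HP1 Hps Hc HW Hdec cmax_ge0 Hmu0 Hmu1).
Qed.
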